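(* For all integers $m,n\geq 3$, let $T_{m,n}=C_m\Box C_n$. Then $\chi_i(T_{m,n})=5$ if $m\equiv 0 \pmod 5$ and $n\equiv 0 \pmod 5$, and $\chi_i(T_{m,n})=6$ otherwise.
   Context: For a graph $G$, an incidence is a pair $(v,e)$ with $v\in V(G)$, $e\in E(G)$ and $v$ incident with $e$. Two incidences $(v,e)$ and $(w,f)$ are adjacent if $v=w$, or $e=f$, or the edge $vw$ equals $e$ or $f$. An incidence $k$-coloring of $G$ is a map from the set of incidences of $G$ to a set of $k$ colors such that adjacent incidences receive distinct colors; the incidence chromatic number $\chi_i(G)$ is the least such $k$. $C_n$ denotes the cycle on $n$ vertices and $\Box$ the Cartesian product of graphs: $G\Box H$ has vertex set $V(G)\times V(H)$, with $(u_1,v_1)$ adjacent to $(u_2,v_2)$ iff either $u_1=u_2$ and $v_1v_2\in E(H)$, or $v_1=v_2$ and $u_1u_2\in E(G)$. *)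

(* Simple graphs on a finType, given by a symmetric
   irreflexive adjacency relation. *)
From mathcomp Require Import all_boot all_order.
Set Implicit Arguments. Unset Strict Implicit. Unset Printing Implicit Defensive.

Section Incidence.
Variable T : finType.
Variable adj : rel T.

Definition edges : {set {set T}} :=
  [set E : {set T} | [exists v, exists w, adj v w && (E == [set v; w])]].

Definition incidences : {set T * {set T}} :=
  [set p : T * {set T} | (p.2 \in edges) && (p.1 \in p.2)].

Definition inc_adj (p q : T * {set T}) : bool :=
  [|| p.1 == q.1, p.2 == q.2, [set p.1; q.1] == p.2 | [set p.1; q.1] == q.2].

Definition incT := {p : T * {set T} | p \in incidences}.

Definition incidence_coloring (k : nat) (c : {ffun incT -> 'I_k}) : bool :=
  [forall p : incT, forall q : incT,
      ((p != q) && inc_adj (val p) (val q)) ==> (c p != c q)].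

Definition incidence_colorable (k : nat) : bool :=
  [exists c : {ffun incT -> 'I_k}, incidence_coloring c].

(* Incidence chromatic number: the least k admitting an incidence k-coloring.
   (k = #|incidences| always works, via an injective colouring, so the
   minimum below is taken over a nonempty range.) *)
Definition incidence_chromatic_number : nat :=
  \big[minn/#|incidences|]_(k < #|incidences|.+1 | incidence_colorable k) (k : nat).
End Incidence.

Definition cycle_rel (n : nat) : rel 'I_n :=
  fun i j => (val j == (val i).+1 %% n) || (val i == (val j).+1 %% n).

Definition box (U V : finType) (G : rel U) (H : rel V) : rel (U * V) :=
  fun x y => ((x.1 == y.1) && H x.2 y.2) || ((x.2 == y.2) && G x.1 y.1).

From mathcomp Require Import all_boot all_order.
From mathcomp Require Import zify.
Set Implicit Arguments. Unset Strict Implicit. Unset Printing Implicit Defensive.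

(* Every vertex of the torus has degree 4, so the four incidences leaving a
   vertex v and one entering it need 5 colours.  With exactly 5 colours all incidences
   entering v get the same colour f v, and f is injective on every closed neighbourhood.
   Locally, the colour of a vertex then repeats along the lattice spanned by (2, 1) and
   (1, -2) or along its mirror image, so f is 5-periodic in both coordinates, while
   f (x + 1, y) <> f (x, y).  If 5 did not divide m, some multiple of 5 would be 1 mod m.

   Let every vertex reserve a set of colours and give the incidence (v, vw)
   a colour reserved at w but not at v, distinct for the four neighbours w of v.  For 5 | m, n
   the vertex (i, j) reserves i + 2j mod 5.  Otherwise every vertex reserves two of six
   colours, read from a finite table indexed by labels of its two coordinates; the labels
   come from closed walks of lengths m and n in a 5-cycle or in a triangle and a 4-cycle
   glued at a vertex, and the finitely many local configurations are checked by computation. *)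

Lemma size_uniq_bounded (s : seq nat) k :
  uniq s -> all (fun t => t < k) s -> size s <= k.
Proof.
move=> us /allP hs; rewrite -(size_iota 0 k); apply: uniq_leq_size us _ => t /hs.
by rewrite mem_iota.
Qed.

Lemma bigmin_le (I : eqType) (r : seq I) (P : pred I) (F : I -> nat) N x :
  x \in r -> P x -> \big[minn/N]_(i <- r | P i) F i <= F x.
Proof.
elim: r => // y r IH; rewrite inE big_cons => /orP[/eqP<- -> | /IH le_rx Px].
  exact: geq_minl.
by case: ifP => _; rewrite ?geq_min le_rx ?orbT.
Qed.

Section IncidenceColoring.
Variables (T : finType) (adj : rel T).

Lemma set2_eqE (a b c d : T) : a != b ->
  ([set a; b] == [set c; d]) = ((a == c) && (b == d)) || ((a == d) && (b == c)).
Proof.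
move=> neq_ab; apply/eqP/idP => [E|]; last first.
  by case/orP=> /andP[/eqP<- /eqP<-] //; rewrite setUC.
have := set21 a b; have := set22 a b; rewrite E => /set2P[] eb /set2P[] ea;
  by move: neq_ab; rewrite ea eb ?eqxx ?orbT.
Qed.

Lemma colorable_card : incidence_colorable adj #|incidences adj|.
Proof.
have E : #|{: incT adj}| = #|incidences adj| by rewrite card_sig; apply: eq_card.
apply/existsP; exists [ffun p => cast_ord E (enum_rank p)].
apply/forallP => p; apply/forallP => q; apply/implyP => /andP[neq_pq _].
by rewrite !ffunE; apply: contra neq_pq => /eqP /cast_ord_inj /enum_rank_inj ->.
Qed.

Lemma incidence_chromatic_numberE K :
  incidence_colorable adj K -> (forall k, k < K -> ~~ incidence_colorable adj k) ->
  incidence_chromatic_number adj = K.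
Proof.
move=> colK below; have leK : K < #|incidences adj|.+1.
  by rewrite ltnS leqNgt; apply/negP => /below; rewrite colorable_card.
apply/eqP; rewrite eqn_leq; apply/andP; split.
  exact: (bigmin_le (fun k : 'I__ => k : nat) _ (mem_index_enum (Ordinal leK)) colK).
apply: (big_ind (fun x => K <= x)) => [//||i].
  by move=> x y hx hy; rewrite leq_min hx hy.
by rewrite leqNgt; apply: contraL => /below.
Qed.

(* [col v w] is the colour of the incidence [(v, vw)]. *)
Definition arc_coloring k (col : T -> T -> nat) :=
  [/\ forall v w, adj v w -> col v w < k,
      forall v w w', adj v w -> adj v w' -> w != w' -> col v w != col v w' &
      forall v w x, adj v w -> adj w x -> col v w != col w x].

Hypotheses (adj_sym : symmetric adj) (adj_irr : irreflexive adj).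

Lemma adj_neq v w : adj v w -> v != w.
Proof. by apply: contraTneq => ->; rewrite adj_irr. Qed.

Lemma edge_in v w : adj v w -> [set v; w] \in edges adj.
Proof.
by move=> h; rewrite inE; apply/existsP; exists v; apply/existsP; exists w; rewrite h eqxx.
Qed.

Lemma incidence_in v w : adj v w -> (v, [set v; w]) \in incidences adj.
Proof. by move=> h; rewrite inE /= edge_in //= set21. Qed.

Lemma incidenceP (p : incT adj) : exists v w, adj v w /\ val p = (v, [set v; w]).
Proof.
case: p => [[v E]] /=; rewrite inE /= => /andP[].
rewrite inE => /existsP[a /existsP[b /andP[hab /eqP ->]]] /set2P[->|->].
  by exists a, b.
by exists b, a; rewrite adj_sym setUC.
Qed.

Definition far_end (p : T * {set T}) : T := odflt p.1 [pick w | p.2 == [set p.1; w]].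

Lemma far_endE v w : adj v w -> far_end (v, [set v; w]) = w.
Proof.
move=> h; rewrite /far_end /=; case: pickP => [w' /= | /(_ w)]; last by rewrite eqxx.
rewrite set2_eqE ?adj_neq // eqxx /= => /orP[/eqP -> // | /andP[_ /eqP wv]].
by move: (adj_neq h); rewrite wv eqxx.
Qed.

Lemma colorable_of_arc_coloring k col :
  arc_coloring k.+1 col -> incidence_colorable adj k.+1.
Proof.
case=> col_lt out_neq chain_neq; apply/existsP.
exists [ffun p : incT adj => inord (col (val p).1 (far_end (val p)))].
apply/forallP => p; apply/forallP => q; apply/implyP => /andP[].
rewrite !ffunE -val_eqE.
have [v [w [hvw ->]]] := incidenceP p; have [v' [w' [hvw' ->]]] := incidenceP q.
rewrite /inc_adj /= !far_endE // => neq_pq adj_pq.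
suff : col v w != col v' w'.
  by apply: contra_neq => /(congr1 val); rewrite /= !inordK ?col_lt.
case/or4P: adj_pq => [/eqP vv | | |].
- by subst v'; apply: out_neq => //; apply: contraNneq neq_pq => ->.
- rewrite set2_eqE ?adj_neq // => /orP[]/andP[/eqP vv /eqP ww]; subst.
    by rewrite eqxx in neq_pq.
  exact: chain_neq.
- rewrite eq_sym set2_eqE ?adj_neq // eqxx /= => /orP[/eqP wv|/andP[/eqP wv /eqP vw]].
    by subst; apply: chain_neq.
  by move: (adj_neq hvw); rewrite vw eqxx.
- rewrite eq_sym set2_eqE ?adj_neq // => /orP[]/andP[/eqP vv /eqP ww].
    by move: (adj_neq hvw'); rewrite ww eqxx.
  by subst; rewrite eq_sym; apply: chain_neq => //; rewrite adj_sym.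
Qed.

Lemma arc_coloring_of_colorable k :
  incidence_colorable adj k -> exists col, arc_coloring k col.
Proof.
case/existsP => c /forallP c_ok.
pose col v w := if insub (v, [set v; w]) is Some p then val (c p) else 0.
have colE v w (h : adj v w) : col v w = c (Sub (v, [set v; w]) (incidence_in h)).
  by rewrite /col (insubT (mem (incidences adj)) (incidence_in h)).
have c_neq (p q : incT adj) : p != q -> inc_adj (val p) (val q) -> c p != c q.
  by move=> neq_pq adj_pq; have /forallP /(_ q) := c_ok p; rewrite neq_pq adj_pq.
exists col; split=> [v w h | v w w' h h' ww | v w x h h']; rewrite !colE //.
- apply: c_neq; rewrite -?val_eqE /inc_adj /= ?eqxx //.
  rewrite xpair_eqE eqxx /= set2_eqE ?adj_neq //.
  by rewrite (negbTE ww) (eq_sym w) (negbTE (adj_neq h)) !andbF.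
- apply: c_neq; rewrite -?val_eqE /inc_adj /= ?eqxx ?orbT //.
  by rewrite xpair_eqE (negbTE (adj_neq h)).
Qed.

End IncidenceColoring.

Section CycleGraph.
Variables (N : nat) (N_gt2 : 2 < N).

Lemma ordSE (i : 'I_N) : (ordS i : nat) = if i.+1 < N then i.+1 else 0.
Proof.
rewrite /=; case: ltnP => h; first by rewrite modn_small.
have -> : i.+1 = N by apply/eqP; rewrite eqn_leq h ltn_ord.
by rewrite modnn.
Qed.

Lemma ord_predE (i : 'I_N) : (ord_pred i : nat) = if i == 0 :> nat then N.-1 else i.-1.
Proof.
rewrite /=; case: eqP => [-> | i_neq0]; first by rewrite add0n modn_small // prednK // ltnW // ltnW.
have -> : (i + N).-1 = i.-1 + N by lia.
by rewrite modnDr modn_small //; have := ltn_ord i; lia.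
Qed.

Lemma cycle_relE (i j : 'I_N) : cycle_rel i j = (j == ordS i) || (j == ord_pred i).
Proof.
rewrite /cycle_rel; congr (_ || _).
have -> : (val i == (val j).+1 %% N) = (i == ordS j) by [].
by apply/eqP/eqP => [-> | ->]; rewrite ?ordSK ?ord_predK.
Qed.

Lemma ordS_neq (i : 'I_N) : ordS i != i.
Proof.
apply/eqP => /(congr1 (@nat_of_ord N)); rewrite ordSE.
by have := ltn_ord i; case: ifP => ? /=; lia.
Qed.

Lemma ord_pred_neq (i : 'I_N) : ord_pred i != i.
Proof.
apply/eqP => /(congr1 (@nat_of_ord N)); rewrite ord_predE.
by have := ltn_ord i; case: ifP => ? /=; lia.
Qed.

Lemma ordS_neq_pred (i : 'I_N) : ordS i != ord_pred i.
Proof.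
apply/eqP => /(congr1 (@nat_of_ord N)); rewrite ordSE ord_predE.
by have := ltn_ord i; do 2!case: ifP => ? /=; lia.
Qed.

Lemma cycle_rel_irr : irreflexive (@cycle_rel N).
Proof.
move=> i; rewrite cycle_relE !(eq_sym i).
by rewrite (negbTE (ordS_neq i)) (negbTE (ord_pred_neq i)).
Qed.

End CycleGraph.

Definition torus m n : rel ('I_m * 'I_n) := box (@cycle_rel m) (@cycle_rel n).

Definition nb m n (v : 'I_m * 'I_n) (d : nat) : 'I_m * 'I_n :=
  match d with
  | 0 => (ordS v.1, v.2) | 1 => (ord_pred v.1, v.2)
  | 2 => (v.1, ordS v.2) | _ => (v.1, ord_pred v.2)
  end.

Section Torus.
Variables (m n : nat) (m_gt2 : 2 < m) (n_gt2 : 2 < n).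
Implicit Types v w : 'I_m * 'I_n.

Lemma torusE v w : torus v w = [|| w == nb v 0, w == nb v 1, w == nb v 2 | w == nb v 3].
Proof.
case: v w => [a b] [c d]; rewrite /torus /box /= !cycle_relE // !xpair_eqE.
rewrite (eq_sym a c) (eq_sym b d).
by case: (c == a); case: (d == b); case: (c == ordS a); case: (c == ord_pred a);
  case: (d == ordS b); case: (d == ord_pred b).
Qed.

Lemma torus_sym : symmetric (@torus m n).
Proof.
move=> v w; rewrite /torus /box /cycle_rel (eq_sym v.1) (eq_sym v.2).
by rewrite (orbC (val w.2 == _)) (orbC (val w.1 == _)).
Qed.

Lemma nb_neq v d d' : d < 4 -> d' < 4 -> d != d' -> nb v d != nb v d'.
Proof.
have neqF (T : eqType) (x y : T) : x != y -> ((x == y) = false) * ((y == x) = false).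
  by move=> h; split; apply/negbTE; rewrite // eq_sym.
case: v => a b.
have E := (neqF _ _ _ (ordS_neq m_gt2 a), neqF _ _ _ (ord_pred_neq m_gt2 a),
           neqF _ _ _ (ordS_neq_pred m_gt2 a), neqF _ _ _ (ordS_neq n_gt2 b),
           neqF _ _ _ (ord_pred_neq n_gt2 b), neqF _ _ _ (ordS_neq_pred n_gt2 b)).
by case: d => [|[|[|[|d]]]] //; case: d' => [|[|[|[|d']]]] //= _ _ _;
  rewrite xpair_eqE ?E ?andbF ?andFb.
Qed.

Lemma torus_irr : irreflexive (@torus m n).
Proof. by move=> v; rewrite /torus /box !eqxx !cycle_rel_irr. Qed.

Lemma torus_nb v d : d < 4 -> torus v (nb v d).
Proof. by rewrite torusE; case: d => [|[|[|[|d]]]] //= _; rewrite eqxx ?orbT. Qed.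

Definition dir v w : nat :=
  if w == nb v 0 then 0 else if w == nb v 1 then 1 else if w == nb v 2 then 2 else 3.

Lemma dir_lt v w : dir v w < 4.
Proof. by rewrite /dir; do !case: ifP. Qed.

Lemma nb_dir v w : torus v w -> nb v (dir v w) = w.
Proof.
rewrite torusE /dir.
by case: eqP => [->//|_]; case: eqP => [->//|_]; case: eqP => [->//|_] /= /eqP ->.
Qed.

End Torus.

Lemma all2_nth (S U : Type) (r : S -> U -> bool) s t x0 y0 i :
  all2 r s t -> i < size s -> r (nth x0 s i) (nth y0 t i).
Proof.
by elim: s t i => [|x s IH] [|y t] [|i] //= /andP[r_xy /IH]; [rewrite r_xy | apply].
Qed.

Definition choices (Ms : seq (seq nat)) : seq (seq nat) :=
  foldr (fun M P => [seq c :: s | c <- M, s <- P]) [:: [::]] Ms.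

(* [s] lists the colours of the incidences leaving a vertex that reserves the colours [M0],
   the [d]-th one going to a neighbour reserving the colours [nth [::] Ms d]. *)
Definition out_colors_ok k (M0 : seq nat) (Ms : seq (seq nat)) (s : seq nat) :=
  [&& uniq s, all (fun c => (c < k) && (c \notin M0)) s & all2 (fun c M => c \in M) s Ms].

Definition out_colors k M0 Ms := head [::] [seq s <- choices Ms | out_colors_ok k M0 Ms s].

Definition reservation_ok k M0 Ms := out_colors_ok k M0 Ms (out_colors k M0 Ms).

Section TorusReservation.
Variables (m n : nat) (m_gt2 : 2 < m) (n_gt2 : 2 < n).

(* Colour [(v, vw)] by a colour reserved at [w] but not at [v]: the incidences entering [w]
   then never clash with those leaving [w]. *)
Lemma torus_colorable k (M : 'I_m * 'I_n -> seq nat) :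
  (forall v, reservation_ok k.+1 (M v) [:: M (nb v 0); M (nb v 1); M (nb v 2); M (nb v 3)]) ->
  incidence_colorable (@torus m n) k.+1.
Proof.
move=> M_ok.
pose out v := out_colors k.+1 (M v) [:: M (nb v 0); M (nb v 1); M (nb v 2); M (nb v 3)].
have out_ok v : uniq (out v) /\ forall d, d < 4 ->
    [/\ d < size (out v), nth 0 (out v) d < k.+1, nth 0 (out v) d \notin M v
      & nth 0 (out v) d \in M (nb v d)].
  have /and3P[uniq_out /allP out_lt out_in] : out_colors_ok k.+1 (M v) _ (out v) := M_ok v.
  have size_out : size (out v) = 4 by move: out_in; rewrite all2E => /andP[/eqP].
  split=> // d lt_d4; have lt_d : d < size (out v) by rewrite size_out.
  have /andP[-> ->] := out_lt _ (mem_nth 0 lt_d); split=> //.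
  by have := all2_nth 0 [::] out_in lt_d; case: d lt_d4 {lt_d} => [|[|[|[|d]]]].
apply: (@colorable_of_arc_coloring _ _ (@torus_sym m n) (torus_irr m_gt2 n_gt2) k
  (fun v w => nth 0 (out v) (dir v w))).
split=> [v w _ | v w w' h h' neq_ww' | v w x h h'].
- by have [_ /(_ _ (dir_lt v w))[]] := out_ok v.
- have [uniq_out /(_ _ (dir_lt v w))[lt_d _ _ _]] := out_ok v.
  have [_ /(_ _ (dir_lt v w'))[lt_d' _ _ _]] := out_ok v.
  rewrite nth_uniq //; apply: contra neq_ww' => /eqP dir_eq.
  by rewrite -(nb_dir h) dir_eq nb_dir.
- have [_ /(_ _ (dir_lt v w))[_ _ _]] := out_ok v; rewrite nb_dir // => in_Mw.
  have [_ /(_ _ (dir_lt w x))[_ _ notin_Mw _]] := out_ok w.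
  by apply: contraNneq notin_Mw => <-.
Qed.

End TorusReservation.

Lemma reservation_ok5 x : x < 5 ->
  reservation_ok 5 [:: x]
    [:: [:: (x + 1) %% 5]; [:: (x + 4) %% 5]; [:: (x + 2) %% 5]; [:: (x + 3) %% 5]].
Proof. by case: x => [|[|[|[|[|x]]]]] // _; vm_compute. Qed.

(* Each vertex reserves its label in the perfect code [i + 2 j] mod 5 of the torus. *)
Lemma colorable5 m n : 2 < m -> 2 < n -> 5 %| m -> 5 %| n ->
  incidence_colorable (@torus m n) 5.
Proof.
move=> m_gt2 n_gt2 dvd5m dvd5n.
apply: (torus_colorable m_gt2 n_gt2 (k := 4) (M := fun v => [:: (v.1 + 2 * v.2 : nat) %% 5])).
move=> [i j] /=.
have modm y z : (y %% m + z) %% 5 = (y + z) %% 5 by rewrite -modnDml modn_dvdm // modnDml.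
have modn z y : (z + 2 * (y %% n)) %% 5 = (z + 2 * y) %% 5.
  by rewrite -modnDmr -modnMmr modn_dvdm // modnMmr modnDmr.
rewrite !modm !modn; move: dvd5m dvd5n => /dvdnP[a def_m] /dvdnP[b def_n].
have -> : (i.+1 + 2 * j) %% 5 = ((i + 2 * j) %% 5 + 1) %% 5 by lia.
have -> : ((i + m).-1 + 2 * j) %% 5 = ((i + 2 * j) %% 5 + 4) %% 5 by lia.
have -> : (i + 2 * j.+1) %% 5 = ((i + 2 * j) %% 5 + 2) %% 5 by lia.
have -> : (i + 2 * (j + n).-1) %% 5 = ((i + 2 * j) %% 5 + 3) %% 5 by lia.
by apply: reservation_ok5; rewrite ltn_mod.
Qed.

Definition edge_rel (E : seq (nat * nat)) : rel nat := fun a b => (a, b) \in E.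

(* A triangle and a 4-cycle glued at 0: it has closed walks from 0 of every length 3a + 4b,
   that is, of every length at least 3 except 5. *)
Definition G34 : seq (nat * nat) := [:: (0,1); (1,2); (2,0); (0,3); (3,4); (4,5); (5,0)].
Definition G5 : seq (nat * nat) := [:: (0,1); (1,2); (2,3); (3,4); (4,0)].

Definition reserved (tab : seq (seq (seq nat))) a b := nth [::] (nth [::] tab a) b.

Definition table_ok (E1 E2 : seq (nat * nat)) tab : bool :=
  all (fun ab => all (fun bc => (ab.2 == bc.1) ==> all (fun de => all (fun ef => (de.2 == ef.1) ==>
    reservation_ok 6 (reserved tab ab.2 de.2)
      [:: reserved tab bc.2 de.2; reserved tab ab.1 de.2;
          reserved tab ab.2 ef.2; reserved tab ab.2 de.1]) E2) E2) E1) E1.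

Definition tab34x34 : seq (seq (seq nat)) :=
  [:: [:: [:: 0; 1]; [:: 0; 2]; [:: 0; 3]; [:: 0; 2]; [:: 0; 5]; [:: 0; 3]];
      [:: [:: 1; 4]; [:: 2; 4]; [:: 3; 4]; [:: 2; 3]; [:: 1; 5]; [:: 2; 3]];
      [:: [:: 1; 5]; [:: 2; 5]; [:: 3; 5]; [:: 2; 4]; [:: 1; 4]; [:: 3; 4]];
      [:: [:: 1; 4]; [:: 2; 4]; [:: 4; 5]; [:: 2; 3]; [:: 0; 1]; [:: 2; 3]];
      [:: [:: 3; 5]; [:: 1; 3]; [:: 0; 2]; [:: 1; 5]; [:: 2; 4]; [:: 0; 5]];
      [:: [:: 2; 5]; [:: 4; 5]; [:: 1; 5]; [:: 0; 4]; [:: 3; 4]; [:: 1; 4]]].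
Definition tab5x34 : seq (seq (seq nat)) :=
  [:: [:: [:: 0; 1]; [:: 0; 2]; [:: 0; 3]; [:: 0; 2]; [:: 1; 4]; [:: 0; 3]];
      [:: [:: 0; 4]; [:: 1; 5]; [:: 2; 4]; [:: 0; 5]; [:: 0; 3]; [:: 2; 5]];
      [:: [:: 0; 3]; [:: 3; 5]; [:: 1; 2]; [:: 1; 5]; [:: 1; 2]; [:: 1; 4]];
      [:: [:: 2; 3]; [:: 3; 4]; [:: 0; 1]; [:: 1; 4]; [:: 0; 3]; [:: 0; 1]];
      [:: [:: 0; 5]; [:: 1; 4]; [:: 2; 5]; [:: 3; 4]; [:: 4; 5]; [:: 2; 5]]].
Definition tab34x5 : seq (seq (seq nat)) :=
  [:: [:: [:: 0; 1]; [:: 0; 2]; [:: 0; 3]; [:: 0; 4]; [:: 4; 5]];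
      [:: [:: 1; 5]; [:: 0; 4]; [:: 3; 5]; [:: 2; 5]; [:: 0; 2]];
      [:: [:: 2; 3]; [:: 0; 5]; [:: 1; 2]; [:: 1; 4]; [:: 3; 4]];
      [:: [:: 1; 5]; [:: 0; 4]; [:: 0; 5]; [:: 0; 2]; [:: 2; 3]];
      [:: [:: 1; 2]; [:: 0; 3]; [:: 1; 4]; [:: 1; 5]; [:: 2; 4]];
      [:: [:: 3; 4]; [:: 0; 5]; [:: 1; 2]; [:: 1; 3]; [:: 0; 3]]].

Lemma table_ok34x34 : table_ok G34 G34 tab34x34. Proof. by vm_compute. Qed.
Lemma table_ok5x34 : table_ok G5 G34 tab5x34. Proof. by vm_compute. Qed.
Lemma table_ok34x5 : table_ok G34 G5 tab34x5. Proof. by vm_compute. Qed.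

Lemma table_okP E1 E2 tab a b c d e f : table_ok E1 E2 tab ->
  edge_rel E1 a b -> edge_rel E1 b c -> edge_rel E2 d e -> edge_rel E2 e f ->
  reservation_ok 6 (reserved tab b e)
    [:: reserved tab c e; reserved tab a e; reserved tab b f; reserved tab b d].
Proof.
move=> /allP tab_ok ab bc de ef.
have /allP /(_ _ bc) /implyP /(_ (eqxx _)) /allP /(_ _ de) /allP /(_ _ ef) /implyP := tab_ok _ ab.
by apply; rewrite eqxx.
Qed.

Lemma cycle_nth_pred (e : rel nat) s N (N_gt2 : 2 < N) (size_s : size s = N) (i : 'I_N) :
  cycle e s -> e (nth 0 s (ord_pred i)) (nth 0 s i).
Proof.
case: s size_s => [N0 | x s size_s]; first by rewrite -N0 in N_gt2.
subst N; rewrite /cycle rcons_path => /andP[/(pathP 0) path_s last_s].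
rewrite (ord_predE N_gt2); case: eqP => [-> | i_neq0].
  by rewrite /= -last_nth.
by move: i_neq0 (ltn_ord i); case: (nat_of_ord i) => // i' _; apply: path_s.
Qed.

Lemma cycle_cat0 (e : rel nat) s t :
  cycle e (0 :: s) -> cycle e (0 :: t) -> cycle e (0 :: s ++ 0 :: t).
Proof. by rewrite /= rcons_cat cat_path /= !rcons_path => /andP[-> ->] /andP[-> ->]. Qed.

Lemma cycle_G34 N : 2 < N -> N != 5 -> exists s, size s = N.-1 /\ cycle (edge_rel G34) (0 :: s).
Proof.
elim/ltn_ind: N => N IH N_gt2 N_neq5.
have [N_lt9 | N_ge9] := ltnP N 9.
  have : N \in [:: 3; 4; 6; 7; 8] by rewrite !inE; lia.
  rewrite !inE => /or4P[| | |/orP[]] /eqP ->.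
  - by exists [:: 1; 2].
  - by exists [:: 3; 4; 5].
  - by exists ([:: 1; 2] ++ 0 :: [:: 1; 2]); split; last exact: cycle_cat0.
  - by exists ([:: 1; 2] ++ 0 :: [:: 3; 4; 5]); split; last exact: cycle_cat0.
  - by exists ([:: 3; 4; 5] ++ 0 :: [:: 3; 4; 5]); split; last exact: cycle_cat0.
have [|||s [size_s cycle_s]] := IH (N - 3); try lia.
exists (s ++ 0 :: [:: 1; 2]); split; last exact: cycle_cat0.
by rewrite size_cat size_s /=; lia.
Qed.

Lemma colorable6_of_cycles m n E1 E2 tab s t : 2 < m -> 2 < n -> table_ok E1 E2 tab ->
  size s = m -> size t = n -> cycle (edge_rel E1) s -> cycle (edge_rel E2) t ->
  incidence_colorable (@torus m n) 6.
Proof.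
move=> m_gt2 n_gt2 tab_ok size_s size_t cycle_s cycle_t.
apply: (torus_colorable m_gt2 n_gt2 (k := 5)
  (M := fun v => reserved tab (nth 0 s v.1) (nth 0 t v.2))) => -[i j] /=.
apply: table_okP tab_ok _ _ _ _.
- exact: cycle_nth_pred cycle_s.
- by have := cycle_nth_pred m_gt2 size_s (ordS i) cycle_s; rewrite ordSK.
- exact: cycle_nth_pred cycle_t.
- by have := cycle_nth_pred n_gt2 size_t (ordS j) cycle_t; rewrite ordSK.
Qed.

Local Notation S := ordS.
Local Notation P := ord_pred.

Definition nbhd_colors N1 N2 (g : 'I_N1 -> 'I_N2 -> nat) x y :=
  [:: g x y; g (S x) y; g (P x) y; g x (S y); g x (P y)].

Definition rainbow N1 N2 (g : 'I_N1 -> 'I_N2 -> nat) :=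
  (forall x y, uniq (nbhd_colors g x y)) /\ (forall x y, g x y < 5).

Definition transpose N1 N2 (g : 'I_N1 -> 'I_N2 -> nat) y x := g x y.

Lemma rainbow_transpose N1 N2 (g : 'I_N1 -> 'I_N2 -> nat) : rainbow g -> rainbow (transpose g).
Proof.
case=> g_uniq g_lt; split=> y x; last exact: g_lt.
rewrite /nbhd_colors /transpose.
apply: etrans (g_uniq x y); apply: perm_uniq; rewrite perm_cons.
exact: (permEl (perm_catC [:: _; _] [:: _; _])).
Qed.

(* The two ways the colour of [(x, y)] can repeat: along the lattice spanned by [(2, 1)] and
   [(1, -2)], or along its mirror image spanned by [(1, 2)] and [(2, -1)]. *)
Definition repeat21 N1 N2 (g : 'I_N1 -> 'I_N2 -> nat) x y :=
  [/\ g (S (S x)) (S y) = g x y, g (S x) (P (P y)) = g x y,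
      g (P (P x)) (P y) = g x y & g (P x) (S (S y)) = g x y].

Definition repeat12 N1 N2 (g : 'I_N1 -> 'I_N2 -> nat) x y :=
  [/\ g (S x) (S (S y)) = g x y, g (S (S x)) (P y) = g x y,
      g (P x) (P (P y)) = g x y & g (P (P x)) (S y) = g x y].

Lemma repeat12_transpose N1 N2 (g : 'I_N1 -> 'I_N2 -> nat) x y :
  repeat12 g x y <-> repeat21 (transpose g) y x.
Proof. by split; case. Qed.

Section Rainbow.
Variables (N1 N2 : nat) (g : 'I_N1 -> 'I_N2 -> nat).
Hypothesis g_rainbow : rainbow g.

Lemma nbhd_colors_nth_neq x y i j : i < 5 -> j < 5 -> i != j ->
  nth 0 (nbhd_colors g x y) i != nth 0 (nbhd_colors g x y) j.
Proof. by move=> lt_i lt_j; rewrite nth_uniq //; case: g_rainbow. Qed.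

Lemma nbhd_colors_cover x y c : c < 5 -> c \in nbhd_colors g x y.
Proof.
case: g_rainbow => g_uniq g_lt lt_c; apply: contraT => c_notin.
have := @size_uniq_bounded (c :: nbhd_colors g x y) 5.
by rewrite cons_uniq c_notin g_uniq /= lt_c !g_lt => /(_ isT isT).
Qed.

Local Ltac clash x y i j :=
  exfalso; have /= := @nbhd_colors_nth_neq x y i j isT isT isT; rewrite ?ordSK ?ord_predK.

Lemma repeat21_or_12 x y : repeat21 g x y \/ repeat12 g x y.
Proof.
have lt_gxy : g x y < 5 by case: g_rainbow.
have Q1 : g (S (S x)) (S y) = g x y \/ g (S x) (S (S y)) = g x y.
  have := nbhd_colors_cover (S x) (S y) lt_gxy; rewrite !inE ?ordSK ?ord_predK.
  case/or4P => [| | | /orP[]] /eqP h;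
    [clash (S x) y 3 2 | left | clash x y 3 0 | right | clash x y 1 0];
    by rewrite // -h eqxx.
have Q2 : g (S x) (P (P y)) = g x y \/ g (S (S x)) (P y) = g x y.
  have := nbhd_colors_cover (S x) (P y) lt_gxy; rewrite !inE ?ordSK ?ord_predK.
  case/or4P => [| | | /orP[]] /eqP h;
    [clash (S x) y 4 2 | right | clash x y 4 0 | clash x y 1 0 | left];
    by rewrite // -h eqxx.
have Q3 : g (P (P x)) (P y) = g x y \/ g (P x) (P (P y)) = g x y.
  have := nbhd_colors_cover (P x) (P y) lt_gxy; rewrite !inE ?ordSK ?ord_predK.
  case/or4P => [| | | /orP[]] /eqP h;
    [clash (P x) y 4 1 | clash x y 4 0 | left | clash x y 2 0 | right];
    by rewrite // -h eqxx.
have Q4 : g (P x) (S (S y)) = g x y \/ g (P (P x)) (S y) = g x y.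
  have := nbhd_colors_cover (P x) (S y) lt_gxy; rewrite !inE ?ordSK ?ord_predK.
  case/or4P => [| | | /orP[]] /eqP h;
    [clash (P x) y 3 1 | clash x y 3 0 | right | left | clash x y 2 0];
    by rewrite // -h eqxx.
case: Q1 => h1; case: Q2 => h2; case: Q3 => h3; case: Q4 => h4; try by [left | right].
all: first [ by clash (S (S x)) y 3 4; rewrite h1 h2 eqxx
            | by clash x (P (P y)) 1 2; rewrite h2 h3 eqxx
            | by clash (P (P x)) y 4 3; rewrite h3 h4 eqxx
            | by clash x (S (S y)) 2 1; rewrite h4 h1 eqxx ].
Qed.

Lemma repeat21_shift x y : repeat21 g x y ->
  [/\ repeat21 g (S (S x)) (S y), repeat21 g (S x) (P (P y)),
      repeat21 g (P (P x)) (P y) & repeat21 g (P x) (S (S y))].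
Proof.
case=> e1 e2 e3 e4; split.
- case: (repeat21_or_12 (S (S x)) (S y)) => // -[_ _ + _]; rewrite ?ordSK ?ord_predK e1 => e.
  by clash (S x) y 4 2; rewrite e eqxx.
- case: (repeat21_or_12 (S x) (P (P y))) => // -[_ _ _ +]; rewrite ?ordSK ?ord_predK e2 => e.
  by clash (P x) y 4 1; rewrite e eqxx.
- case: (repeat21_or_12 (P (P x)) (P y)) => // -[+ _ _ _]; rewrite ?ordSK ?ord_predK e3 => e.
  by clash (P x) y 3 1; rewrite e eqxx.
- case: (repeat21_or_12 (P x) (S (S y))) => // -[_ + _ _]; rewrite ?ordSK ?ord_predK e4 => e.
  by clash (S x) y 3 2; rewrite e eqxx.
Qed.

Lemma repeat21_period5 x y : repeat21 g x y ->
  repeat21 g (iter 5 (@ordS N1) x) y /\ g (iter 5 (@ordS N1) x) y = g x y.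
Proof.
move=> r0; have [r1 _ _ _] := repeat21_shift r0; have [r2 _ _ _] := repeat21_shift r1.
have [_ r3 _ _] := repeat21_shift r2; rewrite /= !ordSK in r3 *; split=> //.
case: r2 => _ + _ _; rewrite !ordSK => ->.
by case: r1 => -> _ _ _; case: r0 => -> _ _ _.
Qed.

End Rainbow.

Section RainbowPeriodic.
Variables (N1 N2 : nat) (g : 'I_N1 -> 'I_N2 -> nat).
Hypothesis g_rainbow : rainbow g.

Lemma repeat12_period5 x y : repeat12 g x y ->
  repeat12 g (iter 5 (@ordS N1) x) y /\ g (iter 5 (@ordS N1) x) y = g x y.
Proof.
have shift := repeat21_shift (rainbow_transpose g_rainbow).
move=> r0; have /repeat12_transpose /shift[r1 _ _ _] := r0.
have [_ _ _ r2] := shift _ _ r1; have [_ _ _ r3] := shift _ _ r2.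
move: r1 r2 r3; rewrite /= !ordSK -!repeat12_transpose => r1 r2 r3; split=> //.
case: r2 => _ + _ _; rewrite ordSK => ->; case: r1 => _ + _ _; rewrite ordSK => ->.
by case: r0.
Qed.

Lemma rainbow_period5 x y : g (iter 5 (@ordS N1) x) y = g x y.
Proof.
by case: (repeat21_or_12 g_rainbow x y) => [/(repeat21_period5 g_rainbow) | /repeat12_period5] [].
Qed.

Lemma iter_ordS k (x : 'I_N1) : (iter k (@ordS N1) x : nat) = (x + k) %% N1.
Proof.
elim: k => [|k IH]; first by rewrite addn0 modn_small.
by rewrite iterS /= IH -addn1 modnDml addn1 addnS.
Qed.

Lemma rainbow_iter_period5 t x y : g (iter (5 * t) (@ordS N1) x) y = g x y.
Proof. by elim: t => // t IH; rewrite mulnS iterD rainbow_period5. Qed.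

Lemma rainbow_dvd5 : 0 < N1 -> 0 < N2 -> 5 %| N1.
Proof.
move=> N1_gt0 N2_gt0; apply: contraT => not_dvd.
pose x : 'I_N1 := Ordinal N1_gt0; pose y : 'I_N2 := Ordinal N2_gt0.
have [a _] := @Bezoutl 5 N1 isT.
have /eqP -> : coprime 5 N1 by rewrite prime_coprime.
case/dvdnP => t def_t.
have shift1 : iter (t * 5) (@ordS N1) x = S x.
  by apply: val_inj; rewrite /= iter_ordS -def_t add0n addnC modnMDl.
have := @nbhd_colors_nth_neq _ _ _ g_rainbow x y 1 0 isT isT isT.
by rewrite /= -shift1 mulnC rainbow_iter_period5 eqxx.
Qed.

End RainbowPeriodic.

Section TorusLowerBound.
Variables (m n : nat) (m_gt2 : 2 < m) (n_gt2 : 2 < n).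
Variables (k : nat) (col : 'I_m * 'I_n -> 'I_m * 'I_n -> nat).
Hypothesis col_ok : arc_coloring (@torus m n) k col.

Definition in_out_colors w v :=
  [:: col w v; col v (nb v 0); col v (nb v 1); col v (nb v 2); col v (nb v 3)].

Lemma in_out_colors_uniq w v : torus w v -> uniq (in_out_colors w v).
Proof.
case: col_ok => _ out_neq chain_neq wv.
have outF d d' : d < 4 -> d' < 4 -> d != d' -> (col v (nb v d) == col v (nb v d')) = false.
  by move=> lt_d lt_d' neq_dd'; apply/negbTE/out_neq; rewrite ?torus_nb ?nb_neq.
have inF d : d < 4 -> (col w v == col v (nb v d)) = false.
  by move=> lt_d; apply/negbTE/chain_neq; rewrite ?torus_nb.
by rewrite !cons_uniq !inE !negb_or !inF // !outF.
Qed.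

Lemma in_out_colors_lt w v : torus w v -> all (fun c => c < k) (in_out_colors w v).
Proof.
case: col_ok => col_lt _ _ wv; apply/allP => c.
by rewrite !inE => /or4P[| | | /orP[]] /eqP ->; apply: col_lt; rewrite ?torus_nb.
Qed.

Lemma arc_coloring_ge5 : 5 <= k.
Proof.
pose v : 'I_m * 'I_n := (Ordinal (ltnW (ltnW m_gt2)), Ordinal (ltnW (ltnW n_gt2))).
have wv : torus (nb v 0) v by rewrite torus_sym torus_nb.
exact: size_uniq_bounded (in_out_colors_uniq wv) (in_out_colors_lt wv).
Qed.

Hypothesis k_eq5 : k = 5.

Definition in_color v := col (nb v 0) v.

(* All five colours occur around [v], so every incidence entering [v] gets the one colour
   not used by the incidences leaving [v]. *)
Lemma in_colorE w v : torus w v -> col w v = in_color v.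
Proof.
move=> wv; have wv0 : torus (nb v 0) v by rewrite torus_sym torus_nb.
apply/eqP; apply: contraT => neq_in.
have /andP[notin_out _] := in_out_colors_uniq wv.
have uniq6 : uniq (col w v :: in_out_colors (nb v 0) v).
  by rewrite cons_uniq in_out_colors_uniq // andbT in_cons negb_or neq_in.
have lt6 : all (fun c => c < 5) (col w v :: in_out_colors (nb v 0) v).
  case: col_ok; rewrite -k_eq5 => col_lt _ _.
  by rewrite /= col_lt //=; apply: in_out_colors_lt.
by have := size_uniq_bounded uniq6 lt6.
Qed.

Lemma in_color_rainbow : rainbow (fun x y => in_color (x, y)).
Proof.
split=> [x y | x y]; last first.
  by case: col_ok; rewrite /in_color -k_eq5 => col_lt _ _; rewrite col_lt // torus_sym torus_nb.
have wv : torus (nb (x, y) 0) (x, y) by rewrite torus_sym torus_nb.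
by have := in_out_colors_uniq wv; rewrite /in_out_colors !(in_colorE (torus_nb _ _)).
Qed.

End TorusLowerBound.

Section TorusChromaticNumber.
Variables (m n : nat) (m_gt2 : 2 < m) (n_gt2 : 2 < n).

Lemma torus_colorable_ge5 k : incidence_colorable (@torus m n) k -> 5 <= k.
Proof.
move/(arc_coloring_of_colorable (torus_irr m_gt2 n_gt2)) => [col col_ok].
exact: (arc_coloring_ge5 m_gt2 n_gt2 col_ok).
Qed.

Lemma torus_colorable5_dvd : incidence_colorable (@torus m n) 5 -> 5 %| m /\ 5 %| n.
Proof.
move/(arc_coloring_of_colorable (torus_irr m_gt2 n_gt2)) => [col col_ok].
have g_rainbow := in_color_rainbow m_gt2 n_gt2 col_ok erefl.
have [m_gt0 n_gt0] : 0 < m /\ 0 < n by split; [exact: ltnW (ltnW m_gt2) | exact: ltnW (ltnW n_gt2)].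
split; first exact: rainbow_dvd5 g_rainbow _ _.
exact: rainbow_dvd5 (rainbow_transpose g_rainbow) _ _.
Qed.

Lemma torus_colorable6 : (m != 5) || (n != 5) -> incidence_colorable (@torus m n) 6.
Proof.
have cycle_G5 : cycle (edge_rel G5) [:: 0; 1; 2; 3; 4] by [].
have size_0cons N s : 2 < N -> size s = N.-1 -> size (0 :: s) = N by move=> ? /= ->; lia.
have [m_eq5 | m_neq5] := eqVneq m 5 => [/= n_neq5 | _].
  have [t [/(size_0cons _ _ n_gt2) size_t cycle_t]] := cycle_G34 n_gt2 n_neq5.
  exact: colorable6_of_cycles m_gt2 n_gt2 table_ok5x34 _ size_t cycle_G5 cycle_t.
have [s [/(size_0cons _ _ m_gt2) size_s cycle_s]] := cycle_G34 m_gt2 m_neq5.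
have [n_eq5 | n_neq5] := eqVneq n 5.
  exact: colorable6_of_cycles m_gt2 n_gt2 table_ok34x5 size_s _ cycle_s cycle_G5.
have [t [/(size_0cons _ _ n_gt2) size_t cycle_t]] := cycle_G34 n_gt2 n_neq5.
exact: colorable6_of_cycles m_gt2 n_gt2 table_ok34x34 size_s size_t cycle_s cycle_t.
Qed.

End TorusChromaticNumber.

Unset Implicit Arguments.

Theorem theorem1 (m n : nat) (hm : 3 <= m) (hn : 3 <= n) :
  incidence_chromatic_number (box (@cycle_rel m) (@cycle_rel n)) =
  (if (5 %| m) && (5 %| n) then 5 else 6).
Proof.
change (box _ _) with (@torus m n); apply: incidence_chromatic_numberE.
  case: ifP => [/andP[dvd5m dvd5n] | not_dvd]; first exact: colorable5.
  apply: torus_colorable6 => //; apply: contraFT not_dvd.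
  by rewrite negb_or !negbK => /andP[/eqP -> /eqP ->].
move=> k lt_k; apply/negP => colorable_k.
have ge5 := torus_colorable_ge5 hm hn colorable_k.
case: ifP lt_k => [_ | not_dvd] lt_k; first by lia.
have k_eq5 : k = 5 by lia.
rewrite k_eq5 in colorable_k.
by have [dvd5m dvd5n] := torus_colorable5_dvd hm hn colorable_k; rewrite dvd5m dvd5n in not_dvd.
Qed.
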